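(* Let $(\mathcal{X},d_\mathcal{X})$, $(\mathcal{Y}_k,d_{\mathcal{Y}_k})$, $k=1,\dots,K$, be compact metric spaces, $c_k:\mathcal{X}\times\mathcal{Y}_k\to\mathbb{R}_+$ continuous, and assume that for every $Y=(y_1,\dots,y_K)\in\mathcal{Y}:=\mathcal{Y}_1\times\cdots\times\mathcal{Y}_K$ the problem $\min_{x\in\mathcal{X}}C(x,Y)$, with $C(x,Y):=\sum_{k=1}^K c_k(x,y_k)$, has a unique minimiser $B(Y)$. Assume moreover that there exist $x\in\mathcal{X}$ and $Y\in\mathcal{Y}$ with $x\neq B(Y)$, and let $R:=\max_{(x,Y)\in\mathcal{X}\times\mathcal{Y}} d_\mathcal{X}(x,B(Y))$. Then there exists a function $\delta=\eta\circ d_\mathcal{X}$, where $\eta:[0,R]\to\mathbb{R}_+$ is lower semi-continuous, non-decreasing and satisfies $\eta(s)=0\iff s=0$, such that $$\forall (x,Y)\in\mathcal{X}\times\mathcal{Y},\quad C(x,Y)\ge C(B(Y),Y)+\delta(x,B(Y)).$$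
   Context: $\mathcal{Y}$ is equipped with the product distance; $B$ is continuous so $R$ is finite and positive under the stated assumptions. *)

From HB Require Import structures.
From mathcomp Require Import all_boot all_order all_algebra.
From mathcomp Require Import all_classical all_reals all_analysis.
Set Implicit Arguments. Unset Strict Implicit. Unset Printing Implicit Defensive.
Import Order.TTheory GRing.Theory Num.Theory.
Import numFieldNormedType.Exports.
Local Open Scope classical_set_scope.
Local Open Scope ring_scope.

Definition lsc_on (R : realType) (D : set R) (eta : R -> R) : Prop :=
  forall s, D s -> forall a, a < eta s ->
    exists2 e : R, 0 < e & forall t, D t -> `|t - s| < e -> a < eta t.

Definition totcost (R : realType) (X : Type) (K : nat) (Yk : 'I_K -> Type)
  (c : forall k : 'I_K, X -> Yk k -> R) (x : X) (Y : forall k, Yk k) : R :=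
  \sum_(k < K) c k x (Y k).

From HB Require Import structures.
From mathcomp Require Import all_boot all_order all_algebra.
From mathcomp Require Import all_classical all_reals all_analysis.
From mathcomp Require Import lra.
Import Order.TTheory GRing.Theory Num.Theory.
Import numFieldNormedType.Exports.
Import function_spaces.ArrowAsProduct.
Local Open Scope classical_set_scope.
Local Open Scope ring_scope.

(* For t > 0 the excess cost C(x, Y) - C(B(Y), Y) is bounded below by some
   m(t) > 0 on {d(x, B(Y)) >= t}.  B need not be continuous, so one works with
   triples (x, Y, b) where b minimises C(., Y): with d(x, b) >= t they form a
   compact set, on which C(x, Y) - C(b, Y) is continuous and, by uniqueness of
   the minimiser (b = B(Y) <> x), positive.  The modulus eta(s) is the supremum
   of the bounds m(t) over t < s; using only t < s makes eta left-continuous,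
   hence lower semicontinuous since it is non-decreasing. *)

Lemma mdist_continuous (R : realType) (X : metricType R) :
  continuous (fun p : X * X => mdist p.1 p.2).
Proof.
move=> [x y]; apply/cvgrPdist_lt => e e0 /=.
have e20 : 0 < e / 2 by rewrite divr_gt0.
exists (ball x (e / 2), ball y (e / 2)); first by split; exact: nbhsx_ballx.
move=> [a b] [/=]; rewrite !ballEmdist /= => xa yb.
have := metric_triangle x a y; have := metric_triangle a b y.
have := metric_triangle a x b; have := metric_triangle x y b.
rewrite (metric_sym a x) (metric_sym b y) => *.
rewrite ltr_norml; apply/andP; split; lra.
Qed.

Lemma closed_le_fun (R : realType) (T : topologicalType) (f g : T -> R) :
  continuous f -> continuous g -> closed [set z | f z <= g z].
Proof.
move=> cf cg; have -> : [set z | f z <= g z] = (f \- g) @^-1` [set r | r <= 0].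
  by apply/seteqP; split => z /=; rewrite subr_le0.
apply: preimage_closed; last exact: closed_le.
by move=> z _; apply: cvgB; [exact: cf|exact: cg].
Qed.

Lemma compact_gt0_lbound (R : realType) (T : topologicalType) (S : set T)
    (h : T -> R) :
  compact S -> {within S, continuous h} -> (forall z, S z -> 0 < h z) ->
  exists2 m, 0 < m & forall z, S z -> m <= h z.
Proof.
move=> cS ch h_gt0.
have hS0 : ~ (h @` S) 0 by move=> [z Sz hz0]; have := h_gt0 z Sz; rewrite hz0 ltxx.
have /nbhs_ballP[e e0 sub] : nbhs (0 : R) (~` (h @` S)).
  apply: open_nbhs_nbhs; split => //; apply: closed_openC.
  by apply: compact_closed; [exact: Rhausdorff | exact: continuous_compact].
exists e => // z Sz; rewrite leNgt; apply/negP => hze.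
apply: (sub (h z)); last by exists z.
by rewrite -ball_normE /= sub0r normrN gtr0_norm ?h_gt0.
Qed.

Lemma totcost_continuous (R : realType) (X : topologicalType) (K : nat)
    (Yk : 'I_K -> topologicalType) (c : forall k : 'I_K, X -> Yk k -> R) :
  (forall k, continuous (fun p : X * Yk k => c k p.1 p.2)) ->
  continuous (fun q : X * (forall k, Yk k) => totcost c q.1 q.2).
Proof.
move=> cc; apply: continuous_big; first exact: add_continuous.
move=> k _ q.
apply: (@continuous_comp _ _ _ (fun q : X * (forall k, Yk k) => (q.1, q.2 k))
  (fun p : X * Yk k => c k p.1 p.2)); last exact: cc.
apply: cvg_pair; first exact: cvg_fst.
apply: (@cvg_comp _ _ _ snd (fun f : forall k, Yk k => f k) _ _ _ cvg_snd).
exact: proj_continuous.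
Qed.

Section uniform_gap.
Context {R : realType} {X : metricType R} {K : nat} {Yk : 'I_K -> metricType R}
  {c : forall k : 'I_K, X -> Yk k -> R} {B : (forall k : 'I_K, Yk k) -> X}.
Hypotheses (cX : compact [set: X]) (cY : forall k, compact [set: Yk k])
  (cc : forall k, continuous (fun p : X * Yk k => c k p.1 p.2))
  (Bmin : forall Y x, totcost c (B Y) Y <= totcost c x Y)
  (Buniq : forall Y x, (forall x', totcost c x Y <= totcost c x' Y) -> x = B Y).

Local Notation Z := ((X * (forall k, Yk k)) * X)%type.

Let compact_Z : compact [set: Z].
Proof.
rewrite -setXTT; apply: compact_setX => //; rewrite -setXTT; apply: compact_setX => //.
have -> : [set: forall k, Yk k] = [set Y | forall k, [set: Yk k] (Y k)] by apply/seteqP.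
exact: (@tychonoff _ (fun k => (Yk k : topologicalType)) (fun k => [set: Yk k]) cY).
Qed.

Let totcost_at_continuous (f : Z -> X) :
  continuous f -> continuous (fun z : Z => totcost c (f z) z.1.2).
Proof.
move=> cf z; apply: (@continuous_comp _ _ _ (fun z : Z => (f z, z.1.2))
  (fun q : X * (forall k, Yk k) => totcost c q.1 q.2)); last exact: totcost_continuous.
exact: (@cvg_pair _ _ _ _ _ _ _ _ _ f (fun z : Z => z.1.2) (cf z)
  (cvg_comp _ _ cvg_fst cvg_snd)).
Qed.

Let far_minimisers t := [set z : Z | t <= mdist z.1.1 z.2 /\
  forall w, totcost c z.2 z.1.2 <= totcost c w z.1.2].

Let compact_far_minimisers t : compact (far_minimisers t).
Proof.
apply: subclosed_compact compact_Z _ => //.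
have -> : far_minimisers t = [set z | t <= mdist z.1.1 z.2] `&`
    \bigcap_(w in [set: X]) [set z | totcost c z.2 z.1.2 <= totcost c w z.1.2].
  by apply/seteqP; split => z /= [dz zmin]; split => // w *; exact: zmin.
apply: closedI; last first.
  apply: closed_bigI => w _; apply: closed_le_fun; apply: totcost_at_continuous.
    by move=> z; exact: cvg_snd.
  by move=> z; exact: cvg_cst.
apply: closed_le_fun; first by move=> z; exact: cvg_cst.
move=> z; apply: (@continuous_comp _ _ _ (fun z : Z => (z.1.1, z.2))
  (fun p : X * X => mdist p.1 p.2)); last exact: mdist_continuous.
by apply: cvg_pair; [exact: cvg_comp cvg_fst cvg_fst | exact: cvg_snd].
Qed.

Lemma totcost_gap_unif t : 0 < t -> exists2 m, 0 < m &
  forall x Y, t <= mdist x (B Y) -> m <= totcost c x Y - totcost c (B Y) Y.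
Proof.
move=> t0; have [||m m0 tm] := @compact_gt0_lbound R _ (far_minimisers t)
    (fun z => totcost c z.1.1 z.1.2 - totcost c z.2 z.1.2) (compact_far_minimisers t).
- apply: continuous_subspaceT => z; apply: cvgB; apply: totcost_at_continuous.
    by move=> ?; exact: cvg_comp cvg_fst cvg_fst.
  by move=> ?; exact: cvg_snd.
- move=> [[x Y] b] /= [dxb bmin]; rewrite subr_gt0 ltNge; apply/negP => xmin.
  have bB : b = B Y by apply: Buniq.
  have xB : x = B Y by apply: Buniq => w; exact: le_trans xmin (bmin w).
  by move: dxb; rewrite xB -bB mdistxx leNgt t0.
by exists m => // x Y dxB; apply: (tm ((x, Y), B Y)); split => //= w; exact: Bmin.
Qed.

End uniform_gap.

Section gap_modulus.
Context {R : realType} {T : Type} (d g : T -> R).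
Hypothesis g_ge0 : forall z, 0 <= g z.

Definition gap_lbound (t m : R) := forall z, t <= d z -> m <= g z.

(* The cap [m <= 1] keeps the set bounded when no [z] has [t <= d z]. *)
Definition gap_modulus_set (s : R) :=
  [set m : R | 0 <= m <= 1 /\ exists2 t, 0 < t < s & gap_lbound t m].

Definition gap_modulus (s : R) := if 0 < s then sup (gap_modulus_set s) else 0.

Lemma gap_modulus_set0 s : 0 < s -> gap_modulus_set s 0.
Proof.
move=> s0; split; first by rewrite lexx ler01.
by exists (s / 2) => [|z _]; rewrite ?divr_gt0 ?ltr_pdivrMr ?ltr_pMr ?ltr1n.
Qed.

Lemma has_sup_gap_modulus_set s : 0 < s -> has_sup (gap_modulus_set s).
Proof.
move=> s0; split; first by exists 0; exact: gap_modulus_set0.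
by exists 1 => m [/andP[]].
Qed.

Lemma gap_modulus_setS s s' : s <= s' -> gap_modulus_set s `<=` gap_modulus_set s'.
Proof.
move=> ss' m [m01 [t /andP[t0 ts] tm]]; split => //.
by exists t => //; rewrite t0 (lt_le_trans ts ss').
Qed.

Lemma gap_modulus_set_le s m : 0 < s -> gap_modulus_set s m -> m <= gap_modulus s.
Proof.
move=> s0 sm; rewrite /gap_modulus s0.
exact: ub_le_sup (has_sup_gap_modulus_set _ s0).2 _ sm.
Qed.

Lemma gap_modulus_ge0 s : 0 <= gap_modulus s.
Proof.
have [s0|s_le0] := ltP 0 s.
  exact: gap_modulus_set_le _ _ s0 (gap_modulus_set0 _ s0).
by rewrite /gap_modulus ltNge s_le0.
Qed.

Lemma gap_modulus0 : gap_modulus 0 = 0.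
Proof. by rewrite /gap_modulus ltxx. Qed.

Lemma gap_modulus_nondecreasing : {homo gap_modulus : s s' / s <= s'}.
Proof.
move=> s s' ss'; rewrite {1}/gap_modulus; case: ifPn => s0; last exact: gap_modulus_ge0.
have s'0 := lt_le_trans s0 ss'.
rewrite /gap_modulus s'0; apply: sup_le; last exact: has_sup_gap_modulus_set.
- by move=> m /(@gap_modulus_setS _ _ ss') ?; exists m.
- by exists 0; exact: gap_modulus_set0.
Qed.

Lemma gap_modulus_le_gap z : gap_modulus (d z) <= g z.
Proof.
rewrite /gap_modulus; case: ifPn => dz0 //.
apply: ge_sup; first by exists 0; exact: gap_modulus_set0.
by move=> m [_ [t /andP[_ tdz]]]; apply; exact: ltW.
Qed.

Lemma gap_modulus_lsc (D : set R) : lsc_on D gap_modulus.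
Proof.
move=> s _ a; rewrite {1}/gap_modulus; case: ifPn => s0 a_lt; last first.
  by exists 1 => // t _ _; exact: lt_le_trans a_lt (gap_modulus_ge0 t).
have [m [m01 [t /andP[t0 ts] tm]] am] :=
  sup_gt (ex_intro _ 0 (gap_modulus_set0 _ s0)) a_lt.
exists (s - t) => [|u _]; first by rewrite subr_gt0.
rewrite ltr_norml => /andP[su _]; have tu : t < u by lra.
apply: (lt_le_trans am); apply: gap_modulus_set_le; first exact: lt_trans t0 tu.
by split => //; exists t => //; rewrite t0.
Qed.

Hypothesis gap_unif_pos : forall t, 0 < t -> exists2 m, 0 < m & gap_lbound t m.

Lemma gap_modulus_gt0 s : 0 < s -> 0 < gap_modulus s.
Proof.
move=> s0; have s20 : 0 < s / 2 by rewrite divr_gt0.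
have [m m0 tm] := gap_unif_pos _ s20.
have hm : gap_modulus_set s (Num.min m 1).
  split; first by rewrite le_min (ltW m0) ler01 ge_min lexx orbT.
  exists (s / 2); first by rewrite s20 ltr_pdivrMr ?ltr_pMr ?ltr1n.
  by move=> z /tm; apply: le_trans; rewrite ge_min lexx.
by apply: lt_le_trans (gap_modulus_set_le _ _ s0 hm); rewrite lt_min m0 ltr01.
Qed.

Lemma gap_modulus_eq0 s : 0 <= s -> (gap_modulus s = 0 <-> s = 0).
Proof.
rewrite le_eqVlt => /predU1P[<-|s0]; first by rewrite gap_modulus0.
split=> [/eqP|s_eq0]; first by rewrite gt_eqF ?gap_modulus_gt0.
by move: s0; rewrite s_eq0 ltxx.
Qed.

End gap_modulus.

Theorem lemma5 (R : realType) (X : metricType R) (K : nat)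
  (Yk : 'I_K -> metricType R)
  (c : forall k : 'I_K, X -> Yk k -> R)
  (B : (forall k : 'I_K, Yk k) -> X) :
  compact [set: X] ->
  (forall k, compact [set: Yk k]) ->
  (forall k x y, 0 <= c k x y) ->
  (forall k, continuous (fun p : X * Yk k => c k p.1 p.2)) ->
  (* B Y is the unique minimiser of C(., Y) *)
  (forall Y x, totcost c (B Y) Y <= totcost c x Y) ->
  (forall Y x, (forall x', totcost c x Y <= totcost c x' Y) -> x = B Y) ->
  (exists x Y, x <> B Y) ->
  let Rm := sup [set mdist x (B Y) | x in [set: X] & Y in [set: forall k, Yk k]] in
  exists eta : R -> R,
    [/\ lsc_on `[0, Rm] eta,
        {in `[0, Rm] &, {homo eta : s t / s <= t}},
        (forall s, s \in `[0, Rm] -> 0 <= eta s),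
        (forall s, s \in `[0, Rm] -> (eta s = 0 <-> s = 0)) &
        (forall x Y, totcost c (B Y) Y + eta (mdist x (B Y)) <= totcost c x Y)].
Proof.
move=> cX cY _ cc Bmin Buniq _ Rm.
pose d (z : X * (forall k, Yk k)) := mdist z.1 (B z.2).
pose g (z : X * (forall k, Yk k)) := totcost c z.1 z.2 - totcost c (B z.2) z.2.
have g_ge0 z : 0 <= g z by rewrite subr_ge0.
have g_unif_pos t : 0 < t -> exists2 m, 0 < m & gap_lbound d g t m.
  move=> t0; have [m m0 gm] := totcost_gap_unif cX cY cc Bmin Buniq _ t0.
  by exists m => // -[].
exists (gap_modulus d g); split.
- exact: gap_modulus_lsc.
- by move=> s s' _ _; exact: gap_modulus_nondecreasing.
- by move=> s _; exact: gap_modulus_ge0.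
- by move=> s; rewrite in_itv /= => /andP[s0 _]; exact: gap_modulus_eq0.
- by move=> x Y; have := gap_modulus_le_gap d g g_ge0 (x, Y); rewrite /g /=; lra.
Qed.
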